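(* Consider the following four sequences of groups $G_d$ acting on spaces $V_d$, each with the zero-padding maps $\gamma_d\colon V_d\to V_{d+1}$: (i) $V_d=\mathbb{R}^d$, $G_d=\mathfrak{S}_d$ permuting coordinates, $\gamma_d(x)=(x,0)$; (ii) $V_d=\mathbb{R}^{d\times k}$, $G_d=\mathfrak{S}_d$ permuting rows, $\gamma_d$ appending a zero row; (iii) $V_d$ the real symmetric $d\times d$ matrices, $G_d=\mathfrak{S}_d$ acting by $X\mapsto PXP^\top$, $\gamma_d$ appending a zero row and a zero column; (iv) $V_d=\mathbb{R}^{d\times k}$, $G_d$ generated by row permutations and right multiplication by $O(k)$ (acting by $X\mapsto PXQ$), $\gamma_d$ appending a zero row. In each case $\{(V_d,\gamma_d)\}_{d\in\mathbb{N}}$ is a consistent sequence, and for each fixed $m$, for all $d\ge D$ the restriction map $\mathbb{R}[V_{d+1}]_m^{G_{d+1}}\to\mathbb{R}[V_d]_m^{G_d}$, $f\mapsto f\circ\gamma_d$, is a linear isomorphism, where $D=m,\ m,\ 2m,\ 2m$ in cases (i), (ii), (iii), (iv) respectively. That is, the stability degree of $\{(\mathbb{R}[V_d]_m,\gamma_d)\}_{d\in\mathbb{N}}$ is at most $D$.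
   Context: A consistent sequence is a sequence of Euclidean spaces $V_d$ with a nested sequence of compact groups $G_1\subseteq G_2\subseteq\cdots$, $G_d$ acting linearly and orthogonally on $V_d$, together with linear isometries $\gamma_d\colon V_d\to V_{d+1}$ that are $G_d$-equivariant: $\gamma_d(gx)=g\gamma_d(x)$ for $x\in V_d$, $g\in G_d$ (where $G_d\subseteq G_{d+1}$ acts on $V_{d+1}$ fixing the added coordinates). $\mathbb{R}[V]_m$ is the space of real polynomials on $V$ of degree at most $m$ and $\mathbb{R}[V]_m^G$ the $G$-invariant ones. The stability degree of $\{(\mathbb{R}[V_d]_m,\gamma_d)\}$ is the smallest $D$ such that $f\mapsto f\circ\gamma_d$ restricts to an isomorphism $\mathbb{R}[V_{d+1}]_m^{G_{d+1}}\to\mathbb{R}[V_d]_m^{G_d}$ for all $d\ge D$. *)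

From HB Require Import structures.
From mathcomp Require Import all_boot all_order all_algebra all_fingroup.
From mathcomp Require Import reals.
From mathcomp Require Import mpoly.

Set Implicit Arguments.
Unset Strict Implicit.
Unset Printing Implicit Defensive.

Import GRing.Theory Num.Theory.
Local Open Scope ring_scope.

(* Every space V_d is realised as a linear subspace (given by a predicate)
   of a matrix space 'M[R]_(r, c), with the Frobenius inner product. *)
Definition frob (R : realType) (r c : nat) (X Y : 'M[R]_(r, c)) : R :=
  \sum_(i < r) \sum_(j < c) X i j * Y i j.

(* Polynomial functions of degree at most m on V: restrictions to V of
   polynomials of total degree <= m in the entries (coordinates) of the
   ambient matrix space; coordinates are indexed through mxvec. *)
Definition polyfun (R : realType) (r c : nat) (V : 'M[R]_(r, c) -> Prop)
    (m : nat) (f : 'M[R]_(r, c) -> R) : Prop :=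
  exists p : {mpoly R[r * c]},
    (msize p <= m.+1)%N /\ forall X, V X -> f X = p.@[fun i => mxvec X 0 i].

Definition invpoly (R : realType) (r c : nat) (V : 'M[R]_(r, c) -> Prop)
    (Gt : Type) (G : Gt -> Prop) (act : Gt -> 'M[R]_(r, c) -> 'M[R]_(r, c))
    (m : nat) (f : 'M[R]_(r, c) -> R) : Prop :=
  polyfun V m f /\ forall g X, G g -> V X -> f (act g X) = f X.

(* The restriction map f |-> f o gam is a well defined bijection (hence, being
   linear, a linear isomorphism) from R[V2]_m^{G2} onto R[V1]_m^{G1}.
   Functions are identified when they agree on the relevant space. *)
Definition restr_iso (R : realType) (r1 c1 r2 c2 : nat)
    (V1 : 'M[R]_(r1, c1) -> Prop) (Gt1 : Type) (G1 : Gt1 -> Prop)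
    (act1 : Gt1 -> 'M[R]_(r1, c1) -> 'M[R]_(r1, c1))
    (V2 : 'M[R]_(r2, c2) -> Prop) (Gt2 : Type) (G2 : Gt2 -> Prop)
    (act2 : Gt2 -> 'M[R]_(r2, c2) -> 'M[R]_(r2, c2))
    (gam : 'M[R]_(r1, c1) -> 'M[R]_(r2, c2)) (m : nat) : Prop :=
  [/\ (forall f, invpoly V2 G2 act2 m f -> invpoly V1 G1 act1 m (fun X => f (gam X))),
      (forall f1 f2, invpoly V2 G2 act2 m f1 -> invpoly V2 G2 act2 m f2 ->
         (forall X, V1 X -> f1 (gam X) = f2 (gam X)) -> forall Y, V2 Y -> f1 Y = f2 Y)
    & (forall h, invpoly V1 G1 act1 m h ->
         exists f, invpoly V2 G2 act2 m f /\ forall X, V1 X -> f (gam X) = h X)].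

Definition consistent_seq (R : realType) (r c : nat -> nat)
    (V : forall d, 'M[R]_(r d, c d) -> Prop)
    (Gt : nat -> Type) (G : forall d, Gt d -> Prop)
    (act : forall d, Gt d -> 'M[R]_(r d, c d) -> 'M[R]_(r d, c d))
    (emb : forall d, Gt d -> Gt d.+1)
    (gam : forall d, 'M[R]_(r d, c d) -> 'M[R]_(r d.+1, c d.+1)) : Prop :=
  forall d,
  [/\ (forall X, V d X -> V d.+1 (gam d X)) /\
        (forall (a : R) X Y, gam d (a *: X + Y) = a *: gam d X + gam d Y),
      forall X Y, V d X -> V d Y -> frob (gam d X) (gam d Y) = frob X Y,
      forall g, G d g ->
        [/\ forall X, V d X -> V d (act d g X),
            forall (a : R) X Y, act d g (a *: X + Y) = a *: act d g X + act d g Y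
          & forall X Y, V d X -> V d Y -> frob (act d g X) (act d g Y) = frob X Y],
      forall g, G d g -> G d.+1 (emb d g)
    & (forall g X, G d g -> V d X -> gam d (act d g X) = act d.+1 (emb d g) (gam d X))].

Definition stab_deg_le (R : realType) (r c : nat -> nat)
    (V : forall d, 'M[R]_(r d, c d) -> Prop)
    (Gt : nat -> Type) (G : forall d, Gt d -> Prop)
    (act : forall d, Gt d -> 'M[R]_(r d, c d) -> 'M[R]_(r d, c d))
    (gam : forall d, 'M[R]_(r d, c d) -> 'M[R]_(r d.+1, c d.+1))
    (D : nat -> nat) : Prop :=
  forall m d, (D m <= d)%N ->
    restr_iso (V d) (G d) (act d) (V d.+1) (G d.+1) (act d.+1) (gam d) m.

Definition padmx (R : realType) (d : nat) : 'M[R]_(d.+1, d) :=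
  \matrix_(i < d.+1, j < d) ((i : nat) == j)%:R.

Definition liftS (d : nat) (s : 'S_d) : 'S_d.+1 := lift_perm ord_max ord_max s.

Definition allV (R : realType) (r c : nat -> nat) (d : nat) (X : 'M[R]_(r d, c d)) := True.
Definition allG (Gt : nat -> Type) (d : nat) (g : Gt d) := True.

(* (i) V_d = R^d (column vectors), (ii) V_d = R^{d x k}: rows permuted *)
Definition rowperm_act (R : realType) (k d : nat) (s : 'S_d) (X : 'M[R]_(d, k))
  : 'M[R]_(d, k) := perm_mx s *m X.
Definition rowpad (R : realType) (k d : nat) (X : 'M[R]_(d, k)) : 'M[R]_(d.+1, k) :=
  padmx R d *m X.

Definition symV (R : realType) (d : nat) (X : 'M[R]_(d, d)) : Prop := X^T = X.
Definition conj_act (R : realType) (d : nat) (s : 'S_d) (X : 'M[R]_(d, d))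
  : 'M[R]_(d, d) := perm_mx s *m X *m (perm_mx s)^T.
Definition sympad (R : realType) (d : nat) (X : 'M[R]_(d, d)) : 'M[R]_(d.+1, d.+1) :=
  padmx R d *m X *m (padmx R d)^T.

Definition SO_t (R : realType) (k d : nat) : Type := ('S_d * 'M[R]_k)%type.
Definition SO_G (R : realType) (k d : nat) (g : SO_t R k d) : Prop :=
  (g.2)^T *m g.2 = 1%:M.
Definition SO_act (R : realType) (k d : nat) (g : SO_t R k d) (X : 'M[R]_(d, k))
  : 'M[R]_(d, k) := perm_mx g.1 *m X *m g.2.
Definition SO_emb (R : realType) (k d : nat) (g : SO_t R k d) : SO_t R k d.+1 :=
  (liftS g.1, g.2).

From HB Require Import structures.
From mathcomp Require Import all_boot all_order all_algebra all_fingroup.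
From mathcomp Require Import reals.
From mathcomp Require Import mpoly.
From mathcomp Require Import zify.

(* All four families follow one pattern: V_d lies in a space of d-row matrices,
   every rectangular matrix A : 'M_(d', d) acts on it linearly and functorially
   (X |-> A X, or X |-> A X A^T on symmetric matrices), S_d acts through
   permutation matrices and gamma_d through the padding matrix, and each
   coordinate of X involves at most b rows (b = 1 for rows, b = 2 for entries of
   symmetric matrices), whence D = b m.

   Injectivity: for an invariant f of degree <= m on d+1 rows and b m <= d, the
   alternating sum of (-1)^|W| f(mask_W Y) over all row sets W vanishes, since
   each monomial involves at most b m < d+1 rows and toggling an unused row
   cancels terms in pairs.  If f vanishes on padded points, invariance kills
   every term with W proper (move a missing row to the end), so f(Y) = 0.

   Surjectivity: an invariant h on d rows extends to a symmetrised sum of values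
   of h at masked and truncated copies of Y, with alternating weights that undo
   the masks on padded points.

   Case (iv) reuses the maps of case (ii) (D = m <= 2 m); the extension is also
   O(k)-invariant because f(Z Q) and f(Z) are S_{d+1}-invariant and agree after
   padding, hence coincide by injectivity. *)

Set Implicit Arguments.
Unset Strict Implicit.
Unset Printing Implicit Defensive.
Import GRing.Theory Num.Theory.
Local Open Scope ring_scope.

Section MsizeBounds.
Variables (R : idomainType) (n : nat).

Lemma msizeM_le_pred (p q : {mpoly R[n]}) : (msize (p * q) <= (msize p + msize q).-1)%N.
Proof.
have [->|nz_p] := eqVneq p 0; first by rewrite mul0r msize0.
have [->|nz_q] := eqVneq q 0; first by rewrite mulr0 msize0.
by rewrite msizeM.
Qed.

Lemma msize_prod_exp_le k (lq : k.-tuple {mpoly R[n]}) (a : 'X_{1..k}) :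
  (forall i, msize (tnth lq i) <= 2)%N ->
  (msize (\prod_(i < k) tnth lq i ^+ a i) <= (mdeg a).+1)%N.
Proof.
move=> lq_le2.
have msize_exp_le i e : (msize (tnth lq i ^+ e) <= e.+1)%N.
  elim: e => [|e ih]; first by rewrite expr0 msize1.
  rewrite exprSr; apply: leq_trans (msizeM_le_pred _ _) _.
  have := leq_add ih (lq_le2 i); move: (msize _) (msize _) => u v; lia.
rewrite mdegE; apply: (big_rec2 (fun s x => msize x <= s.+1)%N) => [|i s x _ ih].
  by rewrite msize1.
apply: leq_trans (msizeM_le_pred _ _) _.
have := leq_add (msize_exp_le i (a i)) ih; move: (msize _) (msize _) => u v; lia.
Qed.

End MsizeBounds.

Section PolyFun.
Variable R : realType.
Implicit Types (r c m : nat).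

Lemma eq_polyfun r c (V : 'M[R]_(r, c) -> Prop) m f g :
  (forall X, V X -> f X = g X) -> polyfun V m f -> polyfun V m g.
Proof. by move=> e [p [hp hf]]; exists p; split=> // X VX; rewrite -e // hf. Qed.

Lemma polyfun0 r c (V : 'M[R]_(r, c) -> Prop) m : polyfun V m (fun _ => 0).
Proof. by exists 0; split; [rewrite msize0 | move=> X _; rewrite meval0]. Qed.

Lemma polyfunD r c (V : 'M[R]_(r, c) -> Prop) m f g :
  polyfun V m f -> polyfun V m g -> polyfun V m (fun X => f X + g X).
Proof.
move=> [p [hp hf]] [q [hq hg]]; exists (p + q); split.
  by apply: leq_trans (msizeD_le _ _) _; rewrite geq_max hp hq.
by move=> X VX; rewrite mevalD hf ?hg.
Qed.

Lemma polyfunZ r c (V : 'M[R]_(r, c) -> Prop) m (a : R) f :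
  polyfun V m f -> polyfun V m (fun X => a * f X).
Proof.
move=> [p [hp hf]]; exists (a *: p); split; first exact: leq_trans (msizeZ_le _ _) hp.
by move=> X VX; rewrite mevalZ hf.
Qed.

Lemma polyfunB r c (V : 'M[R]_(r, c) -> Prop) m f g :
  polyfun V m f -> polyfun V m g -> polyfun V m (fun X => f X - g X).
Proof.
move=> hf /(polyfunZ (-1)) hg; apply: eq_polyfun (polyfunD hf hg) => X _.
by rewrite mulN1r.
Qed.

Lemma polyfun_sum r c (V : 'M[R]_(r, c) -> Prop) m (I : finType) (P : pred I)
    (F : I -> 'M[R]_(r, c) -> R) :
  (forall i, polyfun V m (F i)) -> polyfun V m (fun X => \sum_(i | P i) F i X).
Proof.
move=> hF; rewrite unlock /=; elim: (index_enum I) => [|i s ih] /=.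
  exact: polyfun0.
by case: (P i) => //; apply: polyfunD.
Qed.

Lemma polyfun_comp r1 c1 r2 c2 (V1 : 'M[R]_(r1, c1) -> Prop)
    (V2 : 'M[R]_(r2, c2) -> Prop) m f (L : 'M[R]_(r1, c1) -> 'M[R]_(r2, c2)) :
  (forall (a : R) X Y, L (a *: X + Y) = a *: L X + L Y) ->
  (forall X, V1 X -> V2 (L X)) -> polyfun V2 m f -> polyfun V1 m (fun X => f (L X)).
Proof.
move=> L_lin L_V [p [hp hf]].
pose LL : {linear 'M[R]_(r1, c1) -> 'M[R]_(r2, c2)} :=
  HB.pack L (GRing.isLinear.Build _ _ _ _ L L_lin).
pose q (t : 'I_(r2 * c2)) : {mpoly R[r1 * c1]} :=
  \sum_(i < r1) \sum_(j < c1) mxvec (L (delta_mx i j)) 0 t *: 'X_(mxvec_index i j).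
exists (p \mPo [tuple q t | t < r2 * c2]); split.
  rewrite comp_mpolyE; apply: leq_trans (msize_sum _ _ _) _.
  apply/bigmax_leqP_seq => a ha _; apply: leq_trans (msizeZ_le _ _) _.
  apply: leq_trans (msize_prod_exp_le _ _) (leq_trans (msize_mdeg_lt ha) hp).
  move=> t; rewrite tnth_mktuple; apply: leq_trans (msize_sum _ _ _) _.
  apply/bigmax_leqP => i _; apply: leq_trans (msize_sum _ _ _) _.
  apply/bigmax_leqP => j _; apply: leq_trans (msizeZ_le _ _) _.
  by rewrite msizeX mdeg1.
move=> X VX; rewrite comp_mpoly_meval (hf _ (L_V _ VX)).
apply: meval_eq => t; rewrite tnth_mktuple -[L]/(LL : _ -> _).
rewrite {1}(matrix_sum_delta X) !linear_sum summxE; apply: eq_bigr => i _.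
rewrite !linear_sum summxE; apply: eq_bigr => j _.
by rewrite !linearZ /= mxE mevalXU mxvecE mulrC.
Qed.

End PolyFun.

Lemma sum_involution (V : nmodType) (T : finType) (phi : T -> T) (P : pred T)
    (F : T -> V) :
  involutive phi -> (forall x, P (phi x) = ~~ P x) ->
  \sum_x F x = \sum_(x | P x) (F x + F (phi x)).
Proof.
move=> phiK phiP; rewrite (bigID P) /= big_split /=; congr (_ + _).
by rewrite (reindex_inj (inv_inj phiK)); apply: eq_bigl => x; rewrite phiP negbK.
Qed.

Definition togset (T : finType) (k : T) (W : {set T}) :=
  if k \in W then W :\ k else k |: W.

Lemma togsetK (T : finType) (k : T) : involutive (togset k).
Proof.
move=> W; rewrite /togset; have [kW|kNW] := boolP (k \in W).
  by rewrite setD11 setD1K.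
by rewrite setU11 setU1K.
Qed.

Lemma in_togset (T : finType) (k : T) W : (k \in togset k W) = (k \notin W).
Proof. by rewrite /togset; case: (k \in W); rewrite ?setD11 ?setU11. Qed.

Lemma card_bigcup_le (I T : finType) (A : {set I}) (F : I -> {set T}) b :
  (forall i, #|F i| <= b)%N -> (#|\bigcup_(i in A) F i| <= #|A| * b)%N.
Proof.
move=> F_le; rewrite -sum_nat_const.
elim/big_rec2: _ => [|i U s _ ih]; first by rewrite cards0.
by rewrite cardsU; apply: leq_trans (leq_subr _ _) (leq_add _ _).
Qed.

Lemma alt_mask_sum_eq0 (R : comNzRingType) n N b (supp : 'I_n -> {set 'I_N})
    (p : {mpoly R[n]}) m (v : 'I_n -> R) :
  (forall t, #|supp t| <= b)%N -> (msize p <= m.+1)%N -> (b * m < N)%N ->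
  \sum_(W : {set 'I_N}) (-1) ^+ #|W| *
     p.@[fun t => if supp t \subset W then v t else 0] = 0.
Proof.
move=> supp_le p_le bm_lt.
under eq_bigr => W _ do rewrite mevalE mulr_sumr.
rewrite exchange_big /= big1_seq // => a /andP[_ a_supp].
pose S := \bigcup_(t in [set t | a t != 0%N]) supp t.
have card_a : (#|[set t | a t != 0%N]| <= m)%N.
  have : (mdeg a < m.+1)%N := leq_trans (msize_mdeg_lt a_supp) p_le.
  rewrite ltnS mdegE; apply: leq_trans.
  rewrite -sum1_card big_mkcond /=; apply: leq_sum => t _.
  by rewrite inE; case: (a t).
have /set0Pn [k kNS] : ~: S != set0.
  rewrite -card_gt0 cardsCs setCK card_ord subn_gt0.
  apply: leq_ltn_trans (card_bigcup_le _ supp_le) (leq_ltn_trans _ bm_lt).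
  by rewrite mulnC leq_mul.
rewrite (sum_involution _ (togsetK k) (P := fun W : {set 'I_N} => k \in W)); last first.
  by move=> W; rewrite in_togset.
apply: big1 => W kW; rewrite /togset kW (cardsD1 k W) kW exprS mulN1r mulNr.
apply/eqP; rewrite addrC subr_eq0; apply/eqP; congr (_ * (_ * _)).
apply: eq_bigr => t _; have [->|at0] := eqVneq (a t) 0%N; first by rewrite !expr0.
have kNt : k \notin supp t.
  by move: kNS; rewrite inE; apply: contraNN => kt; apply/bigcupP; exists t; rewrite ?inE.
by rewrite subsetD1 kNt andbT.
Qed.

Section AltWeight.
Variable R : pzRingType.

Definition alt_weight d (W : {set 'I_d.+1}) : R :=
  if (#|W| <= d)%N then (-1) ^+ (d - #|W|) else 0.

Lemma alt_weight_sum d (G : {set 'I_d} -> R) :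
  \sum_(W : {set 'I_d.+1}) alt_weight W * G [set i | lift ord_max i \in W] = G setT.
Proof.
have preD1 (W : {set 'I_d.+1}) :
    [set i | lift ord_max i \in W :\ ord_max] = [set i | lift ord_max i \in W].
  by apply/setP => i; rewrite !inE eq_sym neq_lift.
rewrite (sum_involution _ (togsetK ord_max) (P := fun W : {set 'I_d.+1} => ord_max \in W)); last first.
  by move=> W; rewrite in_togset.
rewrite (bigD1 setT) ?inE //= big1 ?addr0 => [|W /andP[maxW W_proper]].
  rewrite /togset inE preD1 -mulrDl /alt_weight cardsT card_ord ltnn add0r.
  have -> : #|[set: 'I_d.+1] :\ ord_max| = d by rewrite setTD cardsC1 card_ord.
  rewrite leqnn subnn mul1r.
  by congr G; apply/setP => i; rewrite !inE.
rewrite /togset maxW preD1 -mulrDl.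
have cardWD : #|W| = #|W :\ ord_max|.+1 by rewrite (cardsD1 ord_max W) maxW.
have cardW : (#|W :\ ord_max| < d)%N.
  by have := proper_card (etrans (properT W) W_proper); rewrite cardsT card_ord cardWD.
rewrite /alt_weight cardWD cardW (ltnW cardW) -(subnSK cardW) exprS mulN1r.
by rewrite addrN mul0r.
Qed.

End AltWeight.

Arguments alt_weight {R d}.

Lemma lift_max_eq d (i : 'I_d) (k : 'I_d.+1) : (lift ord_max i == k) = (i == k :> nat).
Proof. by rewrite -val_eqE /= /bump leqNgt ltn_ord. Qed.

Section PadMaskMatrices.
Variable R : realType.

Definition unpadmx d : 'M[R]_(d, d.+1) := (padmx R d)^T.
Definition maskmx n (W : {set 'I_n}) : 'M[R]_n := diag_mx (\row_i (i \in W)%:R).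

Lemma mul_perm_mxE n p (s : 'S_n) (A : 'M[R]_(n, p)) i j :
  (perm_mx s *m A) i j = A (s i) j.
Proof. by rewrite -row_permE mxE. Qed.

Lemma mul_maskmxE n p (W : {set 'I_n}) (A : 'M[R]_(n, p)) i j :
  (maskmx W *m A) i j = (i \in W)%:R * A i j.
Proof. by rewrite mul_diag_mx !mxE. Qed.

Lemma tr_maskmx n (W : {set 'I_n}) : (maskmx W)^T = maskmx W.
Proof. exact: tr_diag_mx. Qed.

Lemma mul_mx_maskmxE p n (A : 'M[R]_(p, n)) (W : {set 'I_n}) i j :
  (A *m maskmx W) i j = A i j * (j \in W)%:R.
Proof. by rewrite mul_mx_diag !mxE. Qed.

Lemma maskmxT n : maskmx [set: 'I_n] = 1%:M.
Proof. by rewrite -diag_const_mx; congr diag_mx; apply/matrixP => i j; rewrite !mxE inE. Qed.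

Lemma maskmx_perm n (W : {set 'I_n}) (s : 'S_n) :
  maskmx W *m perm_mx s = perm_mx s *m maskmx (s @: W).
Proof.
apply/matrixP => i k; rewrite mul_maskmxE mul_perm_mxE !mxE (mem_imset _ _ perm_inj).
by case: (i \in W); case: (s i == k); rewrite ?mul1r ?mul0r ?mulr1n ?mulr0n.
Qed.

Lemma mul_tr_perm_mx n (s : 'S_n) : (perm_mx s)^T *m perm_mx s = 1%:M :> 'M[R]_n.
Proof. by rewrite tr_perm_mx -perm_mxM mulVg perm_mx1. Qed.

Lemma mul_unpadmxE d p (A : 'M[R]_(d.+1, p)) i j :
  (unpadmx d *m A) i j = A (lift ord_max i) j.
Proof.
rewrite mxE (bigD1 (lift ord_max i)) //= big1 ?addr0.
  by rewrite !mxE lift_max eqxx mul1r.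
move=> k k_neq; rewrite !mxE; case: eqP => [ki|_]; last by rewrite mul0r.
by case/eqP: k_neq; apply: val_inj => /=; rewrite ki; exact/esym/lift_max.
Qed.

Lemma mul_padmx_lift d p (B : 'M[R]_(d, p)) i j :
  (padmx R d *m B) (lift ord_max i) j = B i j.
Proof.
rewrite mxE (bigD1 i) //= big1 ?addr0; first by rewrite mxE lift_max eqxx mul1r.
move=> k k_neq; rewrite mxE lift_max; case: eqP => [ik|_]; last by rewrite mul0r.
by case/eqP: k_neq; apply: val_inj.
Qed.

Lemma mul_padmx_max d p (B : 'M[R]_(d, p)) j : (padmx R d *m B) ord_max j = 0.
Proof. by rewrite mxE big1 // => k _; rewrite mxE /= gtn_eqF ?mul0r. Qed.

Lemma mul_unpad_padmx d : unpadmx d *m padmx R d = 1%:M.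
Proof.
apply/matrixP => i k; rewrite mul_unpadmxE !mxE lift_max.
by congr (_%:R); apply/eqP/eqP => [/val_inj|->].
Qed.

Lemma mul_pad_unpadmx d p (A : 'M[R]_(d.+1, p)) : (forall j, A ord_max j = 0) ->
  padmx R d *m (unpadmx d *m A) = A.
Proof.
move=> A_max; apply/matrixP => r k.
case: (unliftP ord_max r) => [i ->|->]; first by rewrite mul_padmx_lift mul_unpadmxE.
by rewrite mul_padmx_max A_max.
Qed.

Lemma padmx_perm d (s : 'S_d) : padmx R d *m perm_mx s = perm_mx (liftS s) *m padmx R d.
Proof.
apply/matrixP => r k; rewrite mul_perm_mxE [RHS]mxE.
case: (unliftP ord_max r) => [i ->|->].
  by rewrite mul_padmx_lift /liftS lift_perm_lift !mxE lift_max.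
by rewrite mul_padmx_max /liftS lift_perm_id /= gtn_eqF.
Qed.

Lemma unpadmx_perm d (s : 'S_d) :
  unpadmx d *m perm_mx (liftS s) = perm_mx s *m unpadmx d.
Proof.
apply/matrixP => i k; rewrite mul_unpadmxE mul_perm_mxE !mxE /liftS lift_perm_lift.
by rewrite lift_max_eq eq_sym.
Qed.

Lemma unpad_tperm_mask_padmx d (W : {set 'I_d.+1}) (j : 'I_d.+1) : j \notin W ->
  unpadmx d *m (perm_mx (tperm j ord_max) *m (maskmx W *m padmx R d)) =
  maskmx [set i | lift ord_max i \in W].
Proof.
move=> jNW; apply/matrixP => i k.
rewrite mul_unpadmxE mul_perm_mxE mul_maskmxE !mxE inE.
have [ij|ij] := eqVneq (lift ord_max i) j.
  by rewrite ij tpermL (negbTE jNW) /= gtn_eqF // mulr0 mul0rn.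
rewrite tpermD ?neq_lift // 1?eq_sym // lift_max.
by rewrite mulr_natr eq_sym.
Qed.

Lemma fixed_perm_liftS d (r : 'S_d.+1) : r ord_max = ord_max -> exists s, r = liftS s.
Proof.
move=> r_max.
have r_lift i : r (lift ord_max i) != ord_max.
  by rewrite -{2}r_max (inj_eq perm_inj) eq_sym neq_lift.
pose f (i : 'I_d) : 'I_d := odflt i (unlift ord_max (r (lift ord_max i))).
have fE i : lift ord_max (f i) = r (lift ord_max i).
  rewrite /f; case: (unliftP ord_max (r (lift ord_max i))) => [k -> //|e].
  by move: (r_lift i); rewrite e eqxx.
have f_inj : injective f.
  by move=> i k e; apply: (@lift_inj _ ord_max); apply: (@perm_inj _ r); rewrite -!fE e.
exists (perm f_inj); apply/permP => x.
case: (unliftP ord_max x) => [i ->|->].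
  by rewrite /liftS lift_perm_lift permE fE.
by rewrite /liftS lift_perm_id r_max.
Qed.

Lemma unpad_tperm_mask_perm d (W : {set 'I_d.+1}) (j : 'I_d.+1) (s : 'S_d.+1) :
  exists t : 'S_d,
    unpadmx d *m (perm_mx (tperm j ord_max) *m maskmx W) *m perm_mx s =
    perm_mx t *m (unpadmx d *m (perm_mx (tperm (s j) ord_max) *m maskmx (s @: W))).
Proof.
have [t tE] : exists t, (tperm j ord_max * s * tperm (s j) ord_max)%g = liftS t.
  by apply: fixed_perm_liftS; rewrite !permM tpermR tpermL.
have tE' : (tperm j ord_max * s = liftS t * tperm (s j) ord_max)%g.
  by rewrite -tE -mulgA tperm2 mulg1.
exists t; rewrite -!mulmxA maskmx_perm !mulmxA -(mulmxA (unpadmx d)) -perm_mxM tE'.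
by rewrite perm_mxM (mulmxA (unpadmx d)) unpadmx_perm.
Qed.

End PadMaskMatrices.


Section PermutationFamily.
Variables (R : realType) (c : nat -> nat) (b : nat).
Variable V : forall d, 'M[R]_(d, c d) -> Prop.
Variable actmx : forall d d', 'M[R]_(d', d) -> 'M[R]_(d, c d) -> 'M[R]_(d', c d').
Variable supp : forall d, 'I_(d * c d) -> {set 'I_d}.
Arguments V {d}.
Arguments actmx {d d'}.
Arguments supp {d}.

Hypothesis actmxM : forall d d' d'' (A : 'M[R]_(d', d)) (B : 'M[R]_(d'', d')) X,
  actmx B (actmx A X) = actmx (B *m A) X.
Hypothesis actmx1 : forall d (X : 'M[R]_(d, c d)), actmx 1%:M X = X.
Hypothesis actmx_closed : forall d d' (A : 'M[R]_(d', d)) X, V X -> V (actmx A X).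
Hypothesis actmx_linear : forall d d' (A : 'M[R]_(d', d)) a X Y,
  actmx A (a *: X + Y) = a *: actmx A X + actmx A Y.
Hypothesis card_supp_le : forall d (t : 'I_(d * c d)), (#|supp t| <= b)%N.
(* Coordinate [t] of [X] involves only the rows in [supp t]. *)
Hypothesis actmx_mask : forall d (W : {set 'I_d}) X (t : 'I_(d * c d)),
  mxvec (actmx (maskmx R W) X) 0 t = if supp t \subset W then mxvec X 0 t else 0.

Definition perm_invpoly d m (f : 'M[R]_(d, c d) -> R) :=
  invpoly (@V d) (fun _ : 'S_d => True) (fun s => actmx (perm_mx s)) m f.

Lemma polyfun_actmx d d' (A : 'M[R]_(d', d)) m f :
  polyfun (@V d') m f -> polyfun (@V d) m (fun X => f (actmx A X)).
Proof. by apply: polyfun_comp => [a X Y | X]; [exact: actmx_linear | exact: actmx_closed]. Qed.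

Lemma perm_invpoly_pad d m f :
  perm_invpoly m f -> perm_invpoly m (fun X => f (actmx (padmx R d) X)).
Proof.
move=> [f_poly f_inv]; split; first exact: polyfun_actmx.
move=> s X _ VX; rewrite actmxM padmx_perm -actmxM.
exact: f_inv (liftS s) _ I (actmx_closed _ VX).
Qed.

Lemma perm_invpoly_mask_eq0 d m f : perm_invpoly m f ->
    (forall X, V X -> f (actmx (padmx R d) X) = 0) ->
  forall (W : {set 'I_d.+1}) Y, W != setT -> V Y -> f (actmx (maskmx R W) Y) = 0.
Proof.
move=> [_ f_inv] f_pad0 W Y W_proper VY.
have /subsetPn [j _ jNW] : ~~ ([set: 'I_d.+1] \subset W) by rewrite subTset.
rewrite -(f_inv (tperm j ord_max) _ I (actmx_closed _ VY)) actmxM.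
rewrite -(mul_pad_unpadmx (A := perm_mx (tperm j ord_max) *m maskmx R W)).
  by rewrite -actmxM f_pad0 //; apply: actmx_closed.
by move=> k; rewrite mul_perm_mxE tpermR !mxE (negbTE jNW) mul0rn.
Qed.

Lemma perm_invpoly_pad_eq0 d m f : (b * m <= d)%N -> perm_invpoly m f ->
  (forall X, V X -> f (actmx (padmx R d) X) = 0) -> forall Y, V Y -> f Y = 0.
Proof.
move=> bm_le f_inv f_pad0 Y VY; have [[p [p_le fE]] _] := f_inv.
have maskE (W : {set 'I_d.+1}) :
    p.@[fun t => if supp t \subset W then mxvec Y 0 t else 0] = f (actmx (maskmx R W) Y).
  by rewrite (fE _ (actmx_closed _ VY)); apply: meval_eq => t; rewrite actmx_mask.
have := alt_mask_sum_eq0 (mxvec Y 0) (@card_supp_le d.+1) p_le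
  (leq_ltn_trans bm_le (ltnSn d)).
under eq_bigr => W _ do rewrite maskE.
rewrite (bigD1 setT) //= big1 ?addr0 => [|W W_proper]; last first.
  by rewrite (perm_invpoly_mask_eq0 f_inv) ?mulr0.
by rewrite maskmxT actmx1 => /eqP; rewrite mulf_eq0 signr_eq0 => /eqP.
Qed.

(* Summing over the dropped row [j] outside [W] makes the sum invariant; after
   division by the number #|~: W| of such [j], the weights are those of
   alt_weight_sum, which undo the masks on padded points. *)
Definition pad_extension d (h : 'M[R]_(d, c d) -> R) (Y : 'M[R]_(d.+1, c d.+1)) : R :=
  \sum_(W : {set 'I_d.+1}) \sum_(j in ~: W) alt_weight W / (d.+1 - #|W|)%:R *
    h (actmx (unpadmx R d *m (perm_mx (tperm j ord_max) *m maskmx R W)) Y).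

Lemma perm_invpoly_pad_extension d m h :
  perm_invpoly m h -> perm_invpoly m (@pad_extension d h).
Proof.
move=> [h_poly h_inv]; split.
  by apply: polyfun_sum => W; apply: polyfun_sum => j; apply/polyfunZ/polyfun_actmx.
move=> s Y _ VY; rewrite /pad_extension [RHS](reindex_inj (imset_inj (@perm_inj _ s))).
apply: eq_bigr => W _; rewrite [RHS](reindex_inj (@perm_inj _ s)) /=.
apply: eq_big => [j|j _]; first by rewrite !in_setC (mem_imset _ _ perm_inj).
rewrite actmxM; have [t ->] := unpad_tperm_mask_perm R W j s.
rewrite -actmxM h_inv //; last exact: actmx_closed.
by rewrite /alt_weight (card_imset W (@perm_inj _ s)).
Qed.

Lemma pad_extensionK d (h : 'M[R]_(d, c d) -> R) X :
  pad_extension h (actmx (padmx R d) X) = h X.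
Proof.
rewrite -[X in h X]actmx1 -(maskmxT R).
rewrite -(alt_weight_sum (fun U => h (actmx (maskmx R U) X))); apply: eq_bigr => W _.
rewrite (eq_bigr (fun _ => alt_weight W / (d.+1 - #|W|)%:R *
    h (actmx (maskmx R [set i | lift ord_max i \in W]) X))) => [|j]; last first.
  by rewrite inE => jNW; rewrite actmxM -!mulmxA unpad_tperm_mask_padmx.
rewrite sumr_const (cardsCs (~: W)) setCK card_ord /alt_weight; case: leqP => W_le.
  by rewrite -[_ *+ _]mulr_natr mulrAC divfK // pnatr_eq0 subn_eq0 -ltnNge ltnS.
by rewrite !mul0r mul0rn.
Qed.

Lemma restr_iso_pad d m : (b * m <= d)%N ->
  restr_iso (@V d) (fun _ : 'S_d => True) (fun s => actmx (perm_mx s))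
    (@V d.+1) (fun _ : 'S_d.+1 => True) (fun s => actmx (perm_mx s))
    (actmx (padmx R d)) m.
Proof.
move=> bm_le; split.
- exact: perm_invpoly_pad.
- move=> f1 f2 [f1_poly f1_inv] [f2_poly f2_inv] f12 Y VY.
  apply/eqP; rewrite -subr_eq0; apply/eqP.
  apply: (@perm_invpoly_pad_eq0 d m (fun Y => f1 Y - f2 Y)) bm_le _ _ Y VY.
    by split=> [|s X _ VX]; [exact: polyfunB | rewrite f1_inv ?f2_inv].
  by move=> X VX; rewrite f12 ?subrr.
- move=> h h_inv; exists (pad_extension h).
  by split=> [|X _]; [exact: perm_invpoly_pad_extension | exact: pad_extensionK].
Qed.

End PermutationFamily.

Section FrobeniusOrthogonal.
Variable R : realType.

Lemma frobE r c (X Y : 'M[R]_(r, c)) : frob X Y = \tr (X *m Y^T).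
Proof.
by apply: eq_bigr => i _; rewrite mxE; apply: eq_bigr => j _; rewrite mxE.
Qed.

Lemma frob_mulmx_orthogonal r r' c c' (A : 'M[R]_(r', r)) (Q : 'M[R]_(c, c'))
    (X Y : 'M[R]_(r, c)) :
  A^T *m A = 1%:M -> Q *m Q^T = 1%:M -> frob (A *m X *m Q) (A *m Y *m Q) = frob X Y.
Proof.
move=> A_orth Q_orth; rewrite !frobE !trmx_mul -!mulmxA (mulmxA Q) Q_orth mul1mx.
by rewrite mxtrace_mulC -!mulmxA A_orth mulmx1 mxtrace_mulC.
Qed.

Lemma frob_mull_orthogonal r r' c (A : 'M[R]_(r', r)) (X Y : 'M[R]_(r, c)) :
  A^T *m A = 1%:M -> frob (A *m X) (A *m Y) = frob X Y.
Proof.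
move=> A_orth; rewrite -[A *m X]mulmx1 -[A *m Y]mulmx1.
by rewrite frob_mulmx_orthogonal // trmx1 mulmx1.
Qed.

End FrobeniusOrthogonal.

Definition unmxvec_index r c (t : 'I_(r * c)) : 'I_r * 'I_c :=
  enum_val (cast_ord (esym (mxvec_cast r c)) t).

Lemma mxvec_indexK r c (i : 'I_r) (j : 'I_c) : unmxvec_index (mxvec_index i j) = (i, j).
Proof. by rewrite /unmxvec_index /mxvec_index cast_ordK enum_rankK. Qed.

Lemma consistent_seq_invpoly (R : realType) (r c : nat -> nat)
    (V : forall d, 'M[R]_(r d, c d) -> Prop) (Gt : nat -> Type) (G : forall d, Gt d -> Prop)
    (act : forall d, Gt d -> 'M[R]_(r d, c d) -> 'M[R]_(r d, c d))
    (emb : forall d, Gt d -> Gt d.+1)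
    (gam : forall d, 'M[R]_(r d, c d) -> 'M[R]_(r d.+1, c d.+1)) d m f :
  consistent_seq V G act emb gam ->
  invpoly (V d.+1) (G d.+1) (act d.+1) m f ->
  invpoly (V d) (G d) (act d) m (fun X => f (gam d X)).
Proof.
move=> /(_ d) [[gam_V gam_lin] _ _ emb_G gam_equiv] [f_poly f_inv]; split.
  exact: polyfun_comp gam_lin gam_V f_poly.
by move=> g X Gg VX; rewrite gam_equiv //; apply: f_inv; [exact: emb_G | exact: gam_V].
Qed.

Section RowPermutations.
Variables (R : realType) (k : nat).

Local Notation allVk := (@allV R (fun d => d) (fun _ => k)).

Lemma rowperm_consistent : consistent_seq allVk (@allG (fun d => 'S_d))
  (@rowperm_act R k) liftS (@rowpad R k).
Proof.
move=> d; split=> //.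
- by split=> // a X Y; rewrite /rowpad mulmxDr scalemxAr.
- by move=> X Y _ _; apply: frob_mull_orthogonal; apply: mul_unpad_padmx.
- move=> s _; split=> // [a X Y | X Y _ _].
    by rewrite /rowperm_act mulmxDr scalemxAr.
  exact/frob_mull_orthogonal/mul_tr_perm_mx.
- by move=> s X _ _; rewrite /rowpad /rowperm_act !mulmxA padmx_perm.
Qed.

Lemma rowperm_stab : stab_deg_le allVk (@allG (fun d => 'S_d))
  (@rowperm_act R k) (@rowpad R k) (fun m => m).
Proof.
move=> m d m_le; rewrite -[m]mul1n in m_le.
apply: (restr_iso_pad (c := fun _ => k) (actmx := fun _ _ A X => A *m X)
  (supp := fun d t => [set (unmxvec_index t).1])) m_le.
- by move=> d1 d2 d3 A B X; rewrite mulmxA.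
- by move=> d1 X; rewrite mul1mx.
- by [].
- by move=> d1 d2 A a X Y; rewrite mulmxDr scalemxAr.
- by move=> d1 t; rewrite cards1.
- move=> d1 W X t; case/mxvec_indexP: t => i j.
  rewrite mxvec_indexK !mxvecE mul_maskmxE sub1set.
  by case: (i \in W); rewrite ?mul1r ?mul0r.
Qed.

End RowPermutations.

Section SymmetricConjugation.
Variable R : realType.

Lemma symV_conj d d' (A : 'M[R]_(d', d)) X : symV X -> symV (A *m X *m A^T).
Proof. by rewrite /symV => X_sym; rewrite !trmx_mul trmxK X_sym mulmxA. Qed.

Lemma conj_linear d d' (A : 'M[R]_(d', d)) a (X Y : 'M[R]_d) :
  A *m (a *: X + Y) *m A^T = a *: (A *m X *m A^T) + A *m Y *m A^T.
Proof. by rewrite mulmxDr mulmxDl scalemxAl scalemxAr. Qed.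

Lemma conj_consistent : consistent_seq (@symV R) (@allG (fun d => 'S_d))
  (@conj_act R) liftS (@sympad R).
Proof.
move=> d; split=> //.
- by split=> [X | a X Y]; [exact: symV_conj | exact: conj_linear].
- move=> X Y _ _; apply: frob_mulmx_orthogonal; first exact: mul_unpad_padmx.
  by rewrite trmxK; apply: mul_unpad_padmx.
- move=> s _; split=> [X | a X Y | X Y _ _]; first exact: symV_conj.
    exact: conj_linear.
  by apply: frob_mulmx_orthogonal; rewrite ?trmxK mul_tr_perm_mx.
- move=> s X _ _; rewrite /sympad /conj_act !mulmxA padmx_perm -!mulmxA.
  by rewrite -trmx_mul padmx_perm trmx_mul.
Qed.

Lemma conj_stab : stab_deg_le (@symV R) (@allG (fun d => 'S_d))
  (@conj_act R) (@sympad R) (fun m => 2 * m)%N.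
Proof.
move=> m d m_le.
apply: (restr_iso_pad (c := fun d => d) (actmx := fun _ _ A X => A *m X *m A^T)
  (supp := fun d t => [set (unmxvec_index t).1; (unmxvec_index t).2])) m_le.
- by move=> d1 d2 d3 A B X; rewrite trmx_mul !mulmxA.
- by move=> d1 X; rewrite trmx1 mul1mx mulmx1.
- by move=> d1 d2 A X; apply: symV_conj.
- by move=> d1 d2 A a X Y; apply: conj_linear.
- by move=> d1 t; rewrite cards2; case: (_ != _).
- move=> d1 W X t; case/mxvec_indexP: t => i j.
  rewrite mxvec_indexK !mxvecE tr_maskmx mul_mx_maskmxE mul_maskmxE subUset !sub1set /=.
  by case: (i \in W); case: (j \in W); rewrite ?mul1r ?mul0r ?mulr1 ?mulr0.
Qed.

End SymmetricConjugation.

Section RowPermutationsOrthogonal.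
Variables (R : realType) (k : nat).

Local Notation allVk := (@allV R (fun d => d) (fun _ => k)).

Lemma SO_consistent : consistent_seq allVk (@SO_G R k) (@SO_act R k) (@SO_emb R k)
  (@rowpad R k).
Proof.
move=> d; split=> //.
- by split=> // a X Y; rewrite /rowpad mulmxDr scalemxAr.
- by move=> X Y _ _; apply: frob_mull_orthogonal; apply: mul_unpad_padmx.
- move=> [s Q] /= Q_orth; split=> // [a X Y | X Y _ _].
    by rewrite /SO_act /= mulmxDr mulmxDl scalemxAl scalemxAr.
  by apply: frob_mulmx_orthogonal; [exact: mul_tr_perm_mx | exact: mulmx1C].
- by move=> [s Q] X _ _; rewrite /rowpad /SO_act /= !mulmxA padmx_perm.
Qed.

Lemma SO_invpoly_rowperm d m f :
  invpoly (@allV R (fun d => d) (fun _ => k) d) (@SO_G R k d) (@SO_act R k d) m f ->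
  invpoly (@allV R (fun d => d) (fun _ => k) d) (@allG (fun d => 'S_d) d)
    (@rowperm_act R k d) m f.
Proof.
move=> [f_poly f_inv]; split=> // s X _ _.
by have := f_inv (s, 1%:M) X; rewrite /SO_act /SO_G /= mulmx1 trmx1 mulmx1; apply.
Qed.

Lemma SO_stab : stab_deg_le allVk (@SO_G R k) (@SO_act R k) (@rowpad R k)
  (fun m => 2 * m)%N.
Proof.
move=> m d m_le; have m_le' : (m <= d)%N by apply: leq_trans m_le; rewrite leq_pmull.
have [_ inj surj] := rowperm_stab R k m_le'.
split=> [f | f1 f2 f1_inv f2_inv | h h_inv].
- exact: consistent_seq_invpoly SO_consistent.
- by apply: inj; apply: SO_invpoly_rowperm.
have [f [[f_poly f_inv] fE]] := surj h (SO_invpoly_rowperm h_inv).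
exists f; split=> //; split=> // [[s Q]] Y /= Q_orth _.
suff fQ : forall Z, f (Z *m Q) = f Z by rewrite /SO_act /= fQ; apply: f_inv.
move=> Z; apply: (inj (fun Z => f (Z *m Q)) f) => //.
  split=> [|s' X _ _]; last by rewrite /rowperm_act -mulmxA f_inv.
  by apply: polyfun_comp f_poly => // a X1 X2; rewrite mulmxDl scalemxAl.
move=> X _; rewrite /rowpad -mulmxA fE // fE //.
by have := (proj2 h_inv) (1%g, Q) X Q_orth I; rewrite /SO_act /= perm_mx1 mul1mx.
Qed.

End RowPermutationsOrthogonal.

Theorem theorem5p1 (R : realType) :
  (@consistent_seq R (fun d => d) (fun _ => 1%N) (@allV R (fun d => d) (fun _ => 1%N))
      (fun d => 'S_d) (@allG (fun d => 'S_d)) (@rowperm_act R 1%N) liftS (@rowpad R 1%N)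
   /\ @stab_deg_le R (fun d => d) (fun _ => 1%N) (@allV R (fun d => d) (fun _ => 1%N))
      (fun d => 'S_d) (@allG (fun d => 'S_d)) (@rowperm_act R 1%N) (@rowpad R 1%N)
      (fun m => m))
  /\
  (forall k : nat,
    @consistent_seq R (fun d => d) (fun _ => k) (@allV R (fun d => d) (fun _ => k))
      (fun d => 'S_d) (@allG (fun d => 'S_d)) (@rowperm_act R k) liftS (@rowpad R k)
   /\ @stab_deg_le R (fun d => d) (fun _ => k) (@allV R (fun d => d) (fun _ => k))
      (fun d => 'S_d) (@allG (fun d => 'S_d)) (@rowperm_act R k) (@rowpad R k)
      (fun m => m))
  /\
  (@consistent_seq R (fun d => d) (fun d => d) (@symV R)
      (fun d => 'S_d) (@allG (fun d => 'S_d)) (@conj_act R) liftS (@sympad R)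
   /\ @stab_deg_le R (fun d => d) (fun d => d) (@symV R)
      (fun d => 'S_d) (@allG (fun d => 'S_d)) (@conj_act R) (@sympad R)
      (fun m => 2 * m)%N)
  /\
  (forall k : nat,
    @consistent_seq R (fun d => d) (fun _ => k) (@allV R (fun d => d) (fun _ => k))
      (@SO_t R k) (@SO_G R k) (@SO_act R k) (@SO_emb R k) (@rowpad R k)
   /\ @stab_deg_le R (fun d => d) (fun _ => k) (@allV R (fun d => d) (fun _ => k))
      (@SO_t R k) (@SO_G R k) (@SO_act R k) (@rowpad R k)
      (fun m => 2 * m)%N).
Proof.
split; first by split; [exact: (rowperm_consistent R 1) | exact: (rowperm_stab R 1)].
split; first by move=> k; split; [exact: rowperm_consistent | exact: rowperm_stab].
split; first by split; [exact: conj_consistent | exact: conj_stab].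
by move=> k; split; [exact: SO_consistent | exact: SO_stab].
Qed.
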